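(* Let $K\ge 2$ arms be given. Suppose arm $i$ has been sampled $n_i\ge1$ times with observed sample mean $x_i\in[0,1]$ (fixed numbers); let $\alpha$ satisfy $x_\alpha=\max_j x_j$ and $\beta\ne\alpha$ satisfy $x_\beta=\max_{j\ne\alpha}x_j$; let $N\ge1$. For each arm $i$, let $Y_i$ be the average of $N$ independent identically distributed random variables with values in $[0,1]$ and mean $x_i$, and set $X_i'=\frac{n_i x_i+NY_i}{n_i+N}$. With $$\Lambda_\alpha^b=\mathbb E\big[(x_\beta-X_\alpha')\,\mathbf 1\{X_\alpha'\le x_\beta\}\big],\qquad \Lambda_i^b=\mathbb E\big[(X_i'-x_\alpha)\,\mathbf 1\{X_i'\ge x_\alpha\}\big]\ (i\ne\alpha),$$ one has $$\Lambda_\alpha^b\le \frac{2N x_\beta}{n_\alpha}\exp\!\big(-1.37\,(x_\alpha-x_\beta)^2 n_\alpha\big),$$ and for every $i\ne\alpha$, $$\Lambda_i^b\le \frac{2N(1-x_\alpha)}{n_i}\exp\!\big(-1.37\,(x_\alpha-x_i)^2 n_i\big).$$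
   Context: $\Lambda_i^b$ is the (budget-based) intrinsic value of information of pulling arm $i$ for the whole remaining budget of $N$ samples, measured with sample means. In this statement the future samples of each arm are modeled as having mean equal to the arm's current sample mean. *)

From HB Require Import structures.
From mathcomp Require Import all_boot all_order all_algebra.
From mathcomp Require Import all_classical all_reals all_analysis.
Set Implicit Arguments. Unset Strict Implicit. Unset Printing Implicit Defensive.
Import Order.TTheory GRing.Theory Num.Theory.
Local Open Scope classical_set_scope.
Local Open Scope ring_scope.

Definition mutually_independent d (T : measurableType d) (R : realType)
  (P : probability T R) (N : nat) (Z : 'I_N -> {RV P >-> R}) : Prop :=
  forall (J : {set 'I_N}) (B : 'I_N -> set R),
    (forall k, measurable (B k)) ->
    P (\bigcap_(k in [set` J]) (Z k @^-1` B k)) =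
      (\prod_(k in J) P (Z k @^-1` B k))%E.

Definition identically_distributed d (T : measurableType d) (R : realType)
  (P : probability T R) (N : nat) (Z : 'I_N -> {RV P >-> R}) : Prop :=
  forall (k l : 'I_N) (A : set R), measurable A ->
    distribution P (Z k) A = distribution P (Z l) A.

Definition sample_avg d (T : measurableType d) (R : realType)
  (P : probability T R) (N : nat) (Z : 'I_N -> {RV P >-> R}) : T -> R :=
  fun w => (\sum_(k < N) Z k w) / N%:R.

Definition updated_mean (R : realType) (T : Type) (n N : nat) (x : R)
  (Y : T -> R) : T -> R :=
  fun w => (n%:R * x + N%:R * Y w) / (n + N)%:R.

From HB Require Import structures.
From mathcomp Require Import all_boot all_order all_algebra.
From mathcomp Require Import all_classical all_reals all_analysis.
From mathcomp Require Import measurable_realfun ring lra.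
Import Order.TTheory GRing.Theory Num.Theory.
Local Open Scope classical_set_scope.
Local Open Scope ring_scope.
Set Implicit Arguments. Unset Strict Implicit. Unset Printing Implicit Defensive.

(* Write X' = (n x + S) / (n + N), with S the sum of the N new samples. For
   0 <= u <= x the shortfall (u - X')^+ is at most N u / (n + N) and vanishes
   unless S <= N (x - t), where t = (n + N) (x - u) / N. A Chernoff bound for sums
   of independent [0, 1]-valued variables of mean at least x gives
   P (S <= N (x - t)) <= exp (- 81/200 N t^2), and (n + N)^2 >= 4 n N turns this
   into exp (- 1.37 (x - u)^2 n). The excess of X'_i over x_alpha is the shortfall
   of the complementary samples 1 - Z. Independence only factorises expectations
   of products of simple functions directly, so the Chernoff bound is proved for
   the Z_k rounded down to a grid of width t / 10. *)

Section RealBounds.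
Variable R : realType.
Implicit Types s w : R.

Lemma expR_ge_taylor3 s : 0 <= s -> 1 + s + s ^+ 2 / 2 + s ^+ 3 / 6 <= expR s.
Proof.
move=> s0.
have partial_le : series (exp_coeff s) 4 <= expR s.
  apply: nondecreasing_cvgn_le; last exact: is_cvg_series_exp_coeff.
  apply/nondecreasing_seqP => n; rewrite /series /= big_nat_recr //= lerDl.
  by rewrite /exp_coeff /= divr_ge0 // exprn_ge0.
suff <- : series (exp_coeff s) 4 = 1 + s + s ^+ 2 / 2 + s ^+ 3 / 6 by [].
rewrite /series /= /exp_coeff /= !big_nat_recr //= big_nil /=.
by rewrite !factS fact0 /= expr0 expr1 !natrM /=; field.
Qed.

Lemma expRN_le_taylor2 s : 0 <= s -> expR (- s) <= 1 - s + s ^+ 2 / 2.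
Proof.
move=> s0; rewrite expRN.
have taylor3 := expR_ge_taylor3 s0.
rewrite -[X in X <= _]div1r ler_pdivrMr ?expR_gt0 //.
have q0 : 0 <= 1 - s + s ^+ 2 / 2 by nra.
apply: le_trans (_ : 1 <= (1 - s + s ^+ 2 / 2) * (1 + s + s ^+ 2 / 2 + s ^+ 3 / 6)) _.
  have -> : (1 - s + s ^+ 2 / 2) * (1 + s + s ^+ 2 / 2 + s ^+ 3 / 6) =
            1 + s ^+ 3 * (1 / 6 + s / 12 + s ^+ 2 / 12) by field.
  by rewrite lerDl mulr_ge0 ?exprn_ge0 // !addr_ge0 // divr_ge0 // exprn_ge0.
exact: ler_wpM2l.
Qed.

Lemma expR_mulN_le_chord s w : 0 <= w <= 1 -> expR (- s * w) <= 1 - w + w * expR (- s).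
Proof.
case/andP => w0 w1.
have := @convex_expR R (Itv01 w0 w1) (- s) 0.
rewrite !convRE /= expR0 mulr0 addr0 mulr1 => chord.
by rewrite mulrC; apply: le_trans chord _; rewrite /unstable.onem; lra.
Qed.

Lemma weighted_expRN_le (I : finType) (p v : I -> R) s :
  0 <= s -> (forall i, 0 <= p i) -> \sum_i p i = 1 -> (forall i, 0 <= v i <= 1) ->
  \sum_i p i * expR (- s * v i) <= expR (- s * \sum_i p i * v i + s ^+ 2 / 2).
Proof.
move=> s0 p0 p1 v01; set mu := \sum_i p i * v i.
have mu0 : 0 <= mu.
  by apply: sumr_ge0 => i _; have [vi0 _] := andP (v01 i); exact: mulr_ge0.
have mu1 : mu <= 1.
  by rewrite -p1; apply: ler_sum => i _; have [_ vi1] := andP (v01 i); exact: ler_piMr.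
have chord : \sum_i p i * expR (- s * v i) <= 1 - (1 - expR (- s)) * mu.
  apply: le_trans (_ : _ <= \sum_i (p i - (1 - expR (- s)) * (p i * v i))) _.
    apply: ler_sum => i _.
    have -> : p i - (1 - expR (- s)) * (p i * v i) = p i * (1 - v i + v i * expR (- s)) by ring.
    by rewrite ler_wpM2l // expR_mulN_le_chord.
  by rewrite sumrB p1 -mulr_sumr.
apply: (le_trans chord); apply: le_trans (expR_ge1Dx _) _; rewrite ler_expR.
have := expRN_le_taylor2 s0.
have p2 : 0 <= s ^+ 2 * (1 - mu) by rewrite mulr_ge0 ?exprn_ge0 // subr_ge0.
nra.
Qed.

(* Since (a + b)^2 >= 4 a b and 4 * 81/200 >= 137/100. *)
Lemma tail_factor_le (a b u e : R) : 0 < a -> 0 < b -> 0 <= u ->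
  b * u / (a + b) * expR (- (81 / 200) * b * ((a + b) * e / b) ^+ 2) <=
  2 * b * u / a * expR (- (137 / 100) * e ^+ 2 * a).
Proof.
move=> a0 b0 u0.
have ab0 : 0 < a + b by rewrite addr_gt0.
have bu0 : 0 <= b * u by rewrite mulr_ge0 // ltW.
apply: ler_pM; [by rewrite divr_ge0 // ltW | exact: expR_ge0 | |].
  apply: le_trans (_ : b * u / a <= _).
    by rewrite ler_wpM2l // lef_pV2 ?posrE // lerDl ltW.
  have : 0 <= b * u / a by rewrite divr_ge0 // ltW.
  by rewrite -!mulrA; lra.
rewrite ler_expR.
have -> : - (81 / 200) * b * ((a + b) * e / b) ^+ 2 = - (81 / 200) * (a + b) ^+ 2 * e ^+ 2 / b.
  by field; rewrite gt_eqF.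
rewrite ler_pdivrMr //.
have : 0 <= e ^+ 2 * (a - b) ^+ 2 by rewrite mulr_ge0 ?sqr_ge0.
have : 0 <= e ^+ 2 * (a * b) by rewrite mulr_ge0 ?sqr_ge0 // mulr_ge0 // ltW.
nra.
Qed.

Lemma shortfall_le (a b y u S : R) : 0 < a -> 0 < b -> 0 <= u <= y -> 0 <= S ->
  (u - (a * y + S) / (a + b)) * ((a * y + S) / (a + b) <= u)%R%:R <=
  b * u / (a + b) * (S <= (a + b) * u - a * y)%R%:R.
Proof.
move=> a0 b0 /andP[u0 uy] S0.
have ab0 : 0 < a + b by rewrite addr_gt0.
have -> : ((a * y + S) / (a + b) <= u) = (S <= (a + b) * u - a * y).
  by rewrite ler_pdivrMr // [u * _]mulrC lerBrDl addrC.
have -> : u - (a * y + S) / (a + b) = (b * u + a * (u - y) - S) / (a + b).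
  by field; rewrite gt_eqF.
rewrite ler_wpM2r ?ler0n // ler_pM2r ?invr_gt0 //.
have : 0 <= a * (y - u) by rewrite mulr_ge0 ?subr_ge0 // ltW.
lra.
Qed.

End RealBounds.

Section Grid.
Variables (R : realType) (h : R).
Hypothesis h_gt0 : 0 < h.

Definition grid_cell (j : nat) : set R := [set r | h * j%:R <= r < h * j.+1%:R].

Definition grid_size := (Num.truncn h^-1).+1.

Lemma measurable_grid_cell j : measurable (grid_cell j).
Proof.
have -> : grid_cell j = [set` `[h * j%:R, h * j.+1%:R[%R].
  by apply/seteqP; split => r; rewrite /grid_cell /= in_itv.
exact: measurable_itv.
Qed.

Lemma grid_cell_truncn r : 0 <= r -> grid_cell (Num.truncn (r / h)) r.
Proof.
move=> r0; rewrite /grid_cell /= -ler_pdivlMl // -ltr_pdivrMl // ![h^-1 * _]mulrC.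
by apply: truncn_itv; rewrite divr_ge0 // ltW.
Qed.

Lemma grid_cellP r j : 0 <= r -> grid_cell j r -> Num.truncn (r / h) = j.
Proof.
move=> r0; rewrite /grid_cell /= => /andP[hjr rhj]; apply/eqP.
rewrite truncn_eq; last by rewrite divr_ge0 // ltW.
by rewrite ler_pdivlMr // ltr_pdivrMr // ![_ * h]mulrC hjr.
Qed.

Lemma truncn_lt_grid_size r : 0 <= r <= 1 -> (Num.truncn (r / h) < grid_size)%N.
Proof.
case/andP => r0 r1; rewrite /grid_size ltnS truncn_le_nat.
apply: le_lt_trans (truncnS_gt h^-1).
by rewrite ler_piMl // invr_ge0 ltW.
Qed.

Lemma grid_point_le1 (j : 'I_grid_size) : h * j%:R <= 1.
Proof.
have : (j%:R : R) <= h^-1.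
  apply: le_trans (_ : (Num.truncn h^-1)%:R <= _); last by rewrite truncn_le invr_ge0 ltW.
  by rewrite ler_nat -ltnS.
by rewrite -ler_pdivlMl // mulr1.
Qed.

Lemma sum_grid_cell (g : nat -> R) r : 0 <= r <= 1 ->
  \sum_(j < grid_size) g j * \1_(grid_cell j) r = g (Num.truncn (r / h)).
Proof.
move=> r01; have r0 : 0 <= r by case/andP: r01.
rewrite (bigD1 (Ordinal (truncn_lt_grid_size r01))) //= big1 ?addr0.
  by rewrite indicE mem_set ?mulr1 //; exact: grid_cell_truncn.
move=> j /eqP jr; rewrite indicE memNset ?mulr0 // => /(grid_cellP r0) rj.
by apply: jr; apply: val_inj.
Qed.

End Grid.

Section SimpleIntegrals.
Variables (d : measure_display) (T : measurableType d) (R : realType) (P : probability T R).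

Definition indep_preimages (N : nat) (Z : 'I_N -> T -> R) : Prop :=
  forall B : 'I_N -> set R, (forall k, measurable (B k)) ->
    P (\bigcap_k (Z k @^-1` B k)) = (\prod_(k < N) P (Z k @^-1` B k))%E.

Lemma mutually_independent_preimages (N : nat) (Z : 'I_N -> {RV P >-> R}) :
  mutually_independent Z -> indep_preimages (fun k => Z k : T -> R).
Proof.
move=> indep B mB; rewrite -(_ : [set` [set: 'I_N]%SET] = setT); last first.
  by apply/seteqP; split => k; rewrite /= inE.
by rewrite indep //; apply: eq_bigl => k; rewrite inE.
Qed.

Lemma indep_preimages_comp (N : nat) (Z : 'I_N -> T -> R) (f : R -> R) :
  measurable_fun setT f -> indep_preimages Z -> indep_preimages (fun k => f \o Z k).
Proof.
move=> mf indep B mB; apply: (indep (fun k => f @^-1` B k)) => k.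
by rewrite -[f @^-1` _]setTI; exact: mf.
Qed.

Lemma integral_sum_indic (I : finType) (A : I -> set T) (g : I -> R) :
  (forall i, measurable (A i)) -> (forall i, 0 <= g i) ->
  (\int[P]_w (\sum_i g i * \1_(A i) w)%:E = (\sum_i g i * fine (P (A i)))%:E)%E.
Proof.
move=> mA g0; under eq_integral do rewrite -sumEFin.
have mgA i : measurable_fun setT (fun w => g i * \1_(A i) w).
  exact/measurable_funM/measurable_indic.
rewrite ge0_integral_sum //; last first.
- by move=> i w _; rewrite lee_fin mulr_ge0.
- by move=> i; exact/measurable_EFinP.
rewrite -sumEFin; apply: eq_bigr => i _; under eq_integral do rewrite EFinM.
rewrite ge0_integralZl ?lee_fin //; last exact/measurable_EFinP/measurable_indic.
by rewrite integral_indic // setIT EFinM fineK // fin_num_measure.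
Qed.

(* Expand the product into a sum over all choices [f] of one cell per factor. *)
Lemma integral_prod_sum_indic (N M : nat) (Z : 'I_N -> T -> R) (B : 'I_M -> set R)
    (a : 'I_M -> R) :
  (forall k, measurable_fun setT (Z k)) -> (forall j, measurable (B j)) ->
  indep_preimages Z -> (forall j, 0 <= a j) ->
  (\int[P]_w (\prod_(k < N) \sum_(j < M) a j * \1_(B j) (Z k w))%:E =
   (\prod_(k < N) \sum_(j < M) a j * fine (P (Z k @^-1` B j)))%:E)%E.
Proof.
move=> mZ mB indep a0.
pose C (f : {ffun 'I_N -> 'I_M}) := \bigcap_k (Z k @^-1` B (f k)).
have mC f : measurable (C f).
  apply: fin_bigcap_measurable; first exact: finite_finset.
  by move=> k _; rewrite -[_ @^-1` _]setTI; exact: mZ.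
have indicC (f : {ffun 'I_N -> 'I_M}) w :
    \prod_(k < N) \1_(B (f k)) (Z k w) = \1_(C f) w :> R.
  rewrite [RHS]indicE; have [wC|wC] := boolP (w \in C f).
    by rewrite big1 // => k _; rewrite indicE mem_set //; move: wC; rewrite inE; exact.
  have [k nk] : exists k, ~ B (f k) (Z k w).
    apply/not_existsP => allk; apply: (negP wC); rewrite inE => k _.
    exact: contrapT (allk k).
  by apply/eqP/prodf_eq0; exists k => //; rewrite indicE memNset.
have PC (f : {ffun 'I_N -> 'I_M}) :
    fine (P (C f)) = \prod_(k < N) fine (P (Z k @^-1` B (f k))).
  rewrite indep // (eq_bigr (fun k => (fine (P (Z k @^-1` B (f k))))%:E)).
    by rewrite prodEFin.
  move=> k _; rewrite fineK // fin_num_measure //.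
  by rewrite -[_ @^-1` _]setTI; exact: mZ.
under eq_integral do rewrite bigA_distr_bigA /=.
under eq_integral do under eq_bigr do rewrite big_split /= indicC.
rewrite integral_sum_indic //; last by move=> f; apply: prodr_ge0.
rewrite bigA_distr_bigA /=; congr EFin; apply: eq_bigr => f _.
by rewrite PC -big_split.
Qed.

Lemma integral_onem (Z : T -> R) : measurable_fun setT Z -> (forall w, 0 <= Z w <= 1) ->
  (\int[P]_w (1 - Z w)%:E = 1 - \int[P]_w (Z w)%:E)%E.
Proof.
move=> mZ Z01.
have Z_ge0 w : setT w -> (0 <= (Z w)%:E)%E by rewrite lee_fin; case/andP: (Z01 w).
have Z_le1 w : setT w -> (0 <= (1 - Z w)%:E)%E by rewrite lee_fin subr_ge0; case/andP: (Z01 w).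
have int1 : (\int[P]_w ((1 - Z w)%:E + (Z w)%:E) = 1)%E.
  under eq_integral do rewrite -EFinD subrK.
  by rewrite integral_cst // mul1e; exact: probability_setT.
have fin : (\int[P]_w (Z w)%:E \is a fin_num)%E.
  rewrite ge0_fin_numE; last exact: integral_ge0.
  apply: le_lt_trans (_ : _ <= \int[P]_w (1%:E))%E _.
    apply: ge0_le_integral => //; first exact/measurable_EFinP.
    by move=> w _; rewrite lee_fin; case/andP: (Z01 w).
  by rewrite integral_cst // mul1e ltey_eq fin_num_measure.
rewrite -int1 ge0_integralD ?addeK //; apply/measurable_EFinP => //.
exact: measurable_funB.
Qed.

Lemma measurable_shortfall (f : T -> R) (u : R) : measurable_fun setT f ->
  measurable_fun setT (fun w => (u - f w) * (f w <= u)%R%:R).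
Proof.
move=> mf; rewrite (_ : (fun w => _) = (fun w => u - f w) \max (fun=> 0)).
  by apply: measurable_maxr => //; exact: measurable_funB.
apply/funext => w /=; case: (leP (f w) u) => fu.
  by rewrite mulr1 max_l // subr_ge0.
by rewrite mulr0 max_r // subr_le0 ltW.
Qed.

Lemma integral_le_mul_prob (g : T -> R) (E : set T) (C : R) :
  measurable E -> measurable_fun setT g -> 0 <= C ->
  (forall w, 0 <= g w) -> (forall w, g w <= C * \1_E w) ->
  (\int[P]_w (g w)%:E <= C%:E * P E)%E.
Proof.
move=> mE mg C0 g0 gE.
apply: le_trans (_ : _ <= \int[P]_w (C * \1_E w)%:E)%E _.
  apply: ge0_le_integral => //.
  - by move=> w _; rewrite lee_fin.
  - exact/measurable_EFinP.
  - exact/measurable_EFinP/measurable_funM/measurable_indic.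
  - by move=> w _; rewrite lee_fin.
under eq_integral do rewrite EFinM.
rewrite ge0_integralZl ?lee_fin //; last exact/measurable_EFinP/measurable_indic.
by rewrite integral_indic // setIT.
Qed.

End SimpleIntegrals.

Section LowerTail.
Variables (d : measure_display) (T : measurableType d) (R : realType) (P : probability T R).
Variables (N : nat) (Z : 'I_N -> T -> R) (m : R).
Hypotheses (Z_meas : forall k, measurable_fun setT (Z k)) (Z_indep : indep_preimages P Z)
  (Z01 : forall k w, 0 <= Z k w <= 1) (Z_mean : forall k, (m%:E <= \int[P]_w (Z k w)%:E)%E).

Lemma measurable_sum_le c : measurable [set w | \sum_(k < N) Z k w <= c].
Proof.
rewrite -[X in measurable X]setTI.
have -> : [set w | \sum_(k < N) Z k w <= c] =
    (fun w => \sum_(k < N) Z k w) @^-1` [set` `]-oo, c]%R].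
  by apply/seteqP; split => w; rewrite /= in_itv.
exact: measurable_sum (measurable_itv _).
Qed.

Section Discretization.
Variable h : R.
Hypothesis h_gt0 : 0 < h.
Local Notation M := (grid_size h).

Definition cell_prob k (j : 'I_M) := fine (P (Z k @^-1` grid_cell h j)).

Lemma measurable_cell_preimage k j : measurable (Z k @^-1` grid_cell h j).
Proof. by have := Z_meas k measurableT (measurable_grid_cell h j); rewrite setTI. Qed.

Lemma truncn_sum_indic (g : nat -> R) k w :
  g (Num.truncn (Z k w / h)) = \sum_(j < M) g j * \1_(Z k @^-1` grid_cell h j) w.
Proof. by rewrite sum_grid_cell. Qed.

Lemma measurable_truncn (g : nat -> R) k :
  measurable_fun setT (fun w => g (Num.truncn (Z k w / h))).
Proof.
rewrite (funext (truncn_sum_indic g k)); apply: measurable_sum => j.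
exact/measurable_funM/measurable_indic/measurable_cell_preimage.
Qed.

Lemma integral_truncn (g : nat -> R) k : (forall j, 0 <= g j) ->
  (\int[P]_w (g (Num.truncn (Z k w / h)))%:E = (\sum_(j < M) g j * cell_prob k j)%:E)%E.
Proof.
move=> g0; rewrite -integral_sum_indic //; last exact: measurable_cell_preimage.
by apply: eq_integral => w _; rewrite truncn_sum_indic.
Qed.

Lemma sum_cell_prob k : \sum_j cell_prob k j = 1.
Proof.
have := integral_truncn (g := fun=> 1) k (fun=> ler01).
rewrite integral_cst //= mul1e probability_setT => /esym/eqP; rewrite eqe => /eqP <-.
by apply: eq_bigr => j _; rewrite mul1r.
Qed.

Lemma cell_mean_ge k : m - h <= \sum_j cell_prob k j * (h * j%:R).
Proof.
have : (m%:E <= (\sum_(j < M) (h * j%:R + h) * cell_prob k j)%:E)%E.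
  rewrite -(integral_truncn (g := fun j => h * j%:R + h)) => [|j]; last first.
    by rewrite addr_ge0 ?mulr_ge0 // ltW.
  apply: (le_trans (Z_mean k)); apply: ge0_le_integral => //.
  - by move=> w _; rewrite lee_fin; case/andP: (Z01 k w).
  - exact/measurable_EFinP.
  - exact/measurable_EFinP/(@measurable_truncn (fun j : nat => h * j%:R + h) k).
  - move=> w _; rewrite lee_fin; case/andP: (Z01 k w) => Z0 _.
    by case/andP: (grid_cell_truncn h_gt0 Z0); rewrite -natr1 mulrDr mulr1 => _ /ltW.
rewrite lee_fin; under eq_bigr do rewrite mulrDl; rewrite big_split /= -mulr_sumr sum_cell_prob.
by under eq_bigr do rewrite mulrC; lra.
Qed.

Lemma cell_mgf_le k s : 0 <= s ->
  \sum_j cell_prob k j * expR (- s * (h * j%:R)) <= expR (- s * (m - h) + s ^+ 2 / 2).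
Proof.
move=> s0; apply: le_trans (weighted_expRN_le s0 _ (sum_cell_prob k) _) _.
- by move=> j; exact: fine_ge0 (measure_ge0 _ _).
- by move=> j; rewrite grid_point_le1 // mulr_ge0 // ltW.
by rewrite ler_expR lerD2r !mulNr lerN2 ler_wpM2l // cell_mean_ge.
Qed.

(* The indicator is bounded by [expR (s * (N c - sum of the grid values))], which
   factorises over [k]. *)
Lemma indic_sum_le_prod_expR (c s : R) w : 0 <= s ->
  \1_[set w | (\sum_(k < N) Z k w <= N%:R * c)%R] w <=
  \prod_(k < N) \sum_(j < M) expR (s * (c - h * j%:R)) * \1_(grid_cell h j) (Z k w).
Proof.
move=> s0.
under eq_bigr => k _ do rewrite (sum_grid_cell h_gt0 (fun j : nat => expR (s * (c - h * j%:R)))) //.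
rewrite -expR_sum indicE; have [|_] := boolP (w \in _); last exact: expR_ge0.
rewrite mem_setE /= => sum_le.
apply: le_trans (expR_ge1Dx _); rewrite lerDl -mulr_sumr mulr_ge0 //.
rewrite sumrB sumr_const card_ord subr_ge0 -mulr_natl; apply: le_trans sum_le.
apply: ler_sum => k _; case/andP: (Z01 k w) => Z0 _.
by case/andP: (grid_cell_truncn h_gt0 Z0).
Qed.

Lemma lower_tail_grid (c s : R) : 0 <= s ->
  (P [set w | (\sum_(k < N) Z k w <= N%:R * c)%R] <=
   (expR (N%:R * (s * c - s * (m - h) + s ^+ 2 / 2)))%:E)%E.
Proof.
move=> s0; set E := [set w | _].
pose a (j : 'I_M) := expR (s * (c - h * j%:R)).
have -> : P E = (\int[P]_w (\1_E w)%:E)%E.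
  by rewrite integral_indic ?setIT //; exact: measurable_sum_le.
apply: le_trans (_ : _ <=
  \int[P]_w (\prod_(k < N) \sum_(j < M) a j * \1_(grid_cell h j) (Z k w))%:E)%E _.
  apply: ge0_le_integral => //.
  - exact/measurable_EFinP/measurable_indic/measurable_sum_le.
  - apply/measurable_EFinP/measurable_prod => k _; apply: measurable_sum => j.
    apply: measurable_funM => //.
    exact: measurableT_comp (measurable_indic (measurable_grid_cell h j)) (Z_meas k).
  - by move=> w _; rewrite lee_fin indic_sum_le_prod_expR.
rewrite integral_prod_sum_indic // => [|j|j]; [|exact: measurable_grid_cell|exact: expR_ge0].
have -> : N%:R * (s * c - s * (m - h) + s ^+ 2 / 2) =
    \sum_(k < N) (s * c + (- s * (m - h) + s ^+ 2 / 2)).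
  by rewrite sumr_const card_ord -mulr_natl; ring.
rewrite lee_fin expR_sum; apply: ler_prod => k _; apply/andP; split.
  by apply: sumr_ge0 => j _; rewrite mulr_ge0 ?expR_ge0 // fine_ge0 // measure_ge0.
have -> : \sum_(j < M) a j * fine (P (Z k @^-1` grid_cell h j)) =
    expR (s * c) * \sum_j cell_prob k j * expR (- s * (h * j%:R)).
  rewrite mulr_sumr; apply: eq_bigr => j _.
  by rewrite [RHS]mulrCA -expRD mulrC /a; congr (_ * expR _); ring.
by rewrite expRD ler_wpM2l ?expR_ge0 ?cell_mgf_le.
Qed.

End Discretization.

(* The grid width [h = t / 10] and the tilt [s = 9 t / 10] give
   [s (h - t) + s ^ 2 / 2 = - 81 t ^ 2 / 200]. *)
Lemma sum_lower_tail t : 0 <= t ->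
  (P [set w | (\sum_(k < N) Z k w <= N%:R * (m - t))%R] <=
   (expR (- (81 / 200) * N%:R * t ^+ 2))%:E)%E.
Proof.
move=> t0; have [->|t_neq0] := eqVneq t 0.
  by rewrite expr0n /= mulr0 expR0 probability_le1 //; exact: measurable_sum_le.
have h_gt0 : 0 < t / 10 by rewrite divr_gt0 // lt_neqAle eq_sym t_neq0.
have s0 : 0 <= t - t / 10 by lra.
apply: le_trans (lower_tail_grid h_gt0 (m - t) s0) _.
by rewrite lee_fin ler_expR le_eqVlt; apply/orP; left; apply/eqP; field.
Qed.

Local Notation X' n := (updated_mean n N m (fun w => (\sum_(k < N) Z k w) / N%:R)).

Lemma updated_mean_shortfall (n : nat) (u : R) : (0 < n)%N -> (0 < N)%N -> 0 <= u <= m ->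
  (\int[P]_w ((u - X' n w) * (X' n w <= u)%R%:R)%:E <=
   (2 * N%:R * u / n%:R * expR (- (137 / 100) * (m - u) ^+ 2 * n%:R))%:E)%E.
Proof.
move=> n_gt0 N_gt0 /andP[u0 um].
have [a0 b0] : (0 : R) < n%:R /\ (0 : R) < N%:R by rewrite !ltr0n.
have ab0 : (0 : R) < n%:R + N%:R by rewrite addr_gt0.
have S0 w : 0 <= \sum_(k < N) Z k w by apply: sumr_ge0 => k _; case/andP: (Z01 k w).
have XE w : X' n w = (n%:R * m + \sum_(k < N) Z k w) / (n%:R + N%:R).
  by rewrite /updated_mean natrD [X in _ + X]mulrC divfK // gt_eqF.
have mX : measurable_fun setT (X' n).
  rewrite (funext XE); apply: measurable_funM => //; apply: measurable_funD => //.
  exact: measurable_sum.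
set t := (n%:R + N%:R) * (m - u) / N%:R.
have t0 : 0 <= t by rewrite divr_ge0 ?mulr_ge0 ?subr_ge0 // ltW.
have threshold : N%:R * (m - t) = (n%:R + N%:R) * u - n%:R * m.
  by rewrite /t; field; rewrite gt_eqF.
have C0 : 0 <= N%:R * u / (n%:R + N%:R) by rewrite divr_ge0 // mulr_ge0 // ltW.
apply: le_trans (integral_le_mul_prob P (measurable_sum_le (N%:R * (m - t))) _ C0 _ _) _.
- exact: measurable_shortfall.
- by move=> w; case: (leP (X' n w) u) => [|_]; rewrite ?mulr0 // mulr1 subr_ge0.
- move=> w; rewrite XE indicE mem_setE /= threshold.
  by apply: shortfall_le; rewrite ?u0.
apply: le_trans (lee_wpmul2l _ (sum_lower_tail t0)) _; first by rewrite lee_fin.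
by rewrite -EFinM lee_fin tail_factor_le.
Qed.

End LowerTail.

Lemma updated_mean_onem (T : Type) (R : realType) (n N : nat) (y : R) (Z : 'I_N -> T -> R) w :
  (0 < N)%N ->
  updated_mean n N (1 - y) (fun w => (\sum_(k < N) (1 - Z k w)) / N%:R) w =
  1 - updated_mean n N y (fun w => (\sum_(k < N) Z k w) / N%:R) w.
Proof.
move=> N_gt0; have N0 : (0 : R) < N%:R by rewrite ltr0n.
rewrite /updated_mean sumrB sumr_const card_ord; field.
by rewrite !gt_eqF // ltr_wpDl.
Qed.

Unset Implicit Arguments.

Theorem corollary1 (d : measure_display) (T : measurableType d) (R : realType)
  (P : probability T R) (K : nat) (n : 'I_K -> nat) (x : 'I_K -> R)
  (alpha beta : 'I_K) (N : nat) (Z : 'I_K -> 'I_N -> {RV P >-> R}) :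
  (2 <= K)%N ->
  (forall i, (1 <= n i)%N) ->
  (forall i, 0 <= x i <= 1) ->
  (forall j, x j <= x alpha) ->
  beta != alpha ->
  (forall j, j != alpha -> x j <= x beta) ->
  (1 <= N)%N ->
  (forall i, mutually_independent (Z i)) ->
  (forall i, identically_distributed (Z i)) ->
  (forall i k w, 0 <= Z i k w <= 1) ->
  (forall i k, ('E_P[Z i k] = (x i)%:E)%E) ->
  let X' := fun i => updated_mean (n i) N (x i) (sample_avg (Z i)) in
  ('E_P[fun w => ((x beta - X' alpha w) * (X' alpha w <= x beta)%R%:R)%R]
     <= ((2 * N%:R * x beta / (n alpha)%:R)
         * expR (- (137 / 100) * (x alpha - x beta) ^+ 2 * (n alpha)%:R))%R%:E)%E
  /\
  (forall i, i != alpha ->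
     ('E_P[fun w => ((X' i w - x alpha) * (x alpha <= X' i w)%R%:R)%R]
       <= ((2 * N%:R * (1 - x alpha) / (n i)%:R)
           * expR (- (137 / 100) * (x alpha - x i) ^+ 2 * (n i)%:R))%R%:E)%E).
Proof.
(* Of the choice of [beta] only [x beta <= x alpha] matters. *)
move=> _ n_gt0 x01 x_max _ _ N_gt0 Z_indep _ Z01 Z_mean X'.
have Z_meas i k : measurable_fun setT (Z i k : T -> R) by exact: measurable_funPT.
have Z_mean_ge i k : ((x i)%:E <= \int[P]_w (Z i k w)%:E)%E by rewrite -expectation_def Z_mean.
split.
  rewrite unlock; apply: updated_mean_shortfall => //.
  - exact: mutually_independent_preimages.
  - by case/andP: (x01 beta) => -> _; rewrite x_max.
move=> i i_ne_alpha; rewrite unlock.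
pose X1 := updated_mean (n i) N (1 - x i) (fun w => (\sum_(k < N) (1 - Z i k w)) / N%:R).
have -> : (\int[P]_w ((X' i w - x alpha) * (x alpha <= X' i w)%R%:R)%:E =
    \int[P]_w (((1 - x alpha) - X1 w) * (X1 w <= 1 - x alpha)%R%:R)%:E)%E.
  apply: eq_integral => w _; rewrite /X1 updated_mean_onem // lerD2l lerN2.
  by congr (EFin (_ * _)); rewrite /X'; ring.
rewrite (_ : x alpha - x i = (1 - x i) - (1 - x alpha)); last by ring.
apply: (updated_mean_shortfall (Z := fun k w => 1 - Z i k w)) => //.
- by move=> k; exact: measurable_funB.
- apply: (indep_preimages_comp (f := fun r => 1 - r)); last exact: mutually_independent_preimages.
  exact: measurable_funB.
- by move=> k w; case/andP: (Z01 i k w) => Z0 Z1; rewrite subr_ge0 Z1 lerBlDr lerDl.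
- by move=> k; rewrite integral_onem // -expectation_def Z_mean EFinB.
- by case/andP: (x01 alpha) => _ xa1; rewrite subr_ge0 xa1 lerD2l lerN2 x_max.
Qed.
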